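(* Let $(M,\rho)$ be a metric space and $f:[a,b]\to M$. If $md(f,x)$ exists for every $x\in[a,b]$ and $x\mapsto md(f,x)$ is Lebesgue integrable on $[a,b]$, then $f$ is absolutely continuous on $[a,b]$.
   Context: $md(f,x)=\lim_{t\to0,\ x+t\in[a,b]}\rho(f(x+t),f(x))/|t|$ when it exists (finite). Absolute continuity of $f$: for every $\varepsilon>0$ there is $\delta>0$ such that for non-overlapping intervals $[a_i,b_i]\subset[a,b]$ with $\sum_i(b_i-a_i)<\delta$ one has $\sum_i\rho(f(b_i),f(a_i))<\varepsilon$. *)

From HB Require Import structures.
From mathcomp Require Import all_boot all_order all_algebra.
From mathcomp Require Import all_classical all_reals all_analysis.
Set Implicit Arguments. Unset Strict Implicit. Unset Printing Implicit Defensive.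
Import Order.TTheory GRing.Theory Num.Theory.
Import numFieldNormedType.Exports.
Local Open Scope classical_set_scope.
Local Open Scope ring_scope.

Definition is_metric (R : realType) (M : Type) (rho : M -> M -> R) : Prop :=
  [/\ forall x y, 0 <= rho x y,
      forall x y, rho x y = 0 <-> x = y,
      forall x y, rho x y = rho y x &
      forall x y z, rho x z <= rho x y + rho y z].

Definition md_is (R : realType) (M : Type) (rho : M -> M -> R)
  (a b : R) (f : R -> M) (x l : R) : Prop :=
  (fun t => rho (f (x + t)) (f x) / `|t|)
    @ within [set t | t != 0 /\ a <= x + t <= b] (nbhs (0 : R)) --> l.

Definition abs_cont_metric (R : realType) (M : Type) (rho : M -> M -> R)
  (a b : R) (f : R -> M) : Prop :=
  forall eps : R, 0 < eps -> exists2 delta : R, 0 < delta &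
    forall (n : nat) (ai bi : 'I_n -> R),
      (forall i, a <= ai i /\ ai i <= bi i /\ bi i <= b) ->
      (forall i j, i != j -> bi i <= ai j \/ bi j <= ai i) ->
      \sum_(i < n) (bi i - ai i) < delta ->
      \sum_(i < n) rho (f (bi i)) (f (ai i)) < eps.

From HB Require Import structures.
From mathcomp Require Import all_boot all_order all_algebra.
From mathcomp Require Import all_classical all_reals all_analysis.
From mathcomp Require Import lra measurable_realfun.
Import Order.TTheory GRing.Theory Num.Theory.
Import numFieldNormedType.Exports.
Local Open Scope classical_set_scope.
Local Open Scope ring_scope.

(* Let A_n be the set of points of [a, b] where md(f, .) exceeds n; integrability
   of md(f, .) gives sum_n |A_n| < oo.  Enlarge each A_n to an open set O_n with
   sum_n |O_n \ A_n| small; the layer mass U(c, y) = sum_n |O_n /\ (c, y]| then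
   controls f: a real induction in y gives rho(f y, f c) <= 2 (y - c) + U(c, y),
   because to the right of a point x with md(f, x) < N + 1 the increment of f is
   below (N + 2) per unit length while U grows at rate at least N, x lying in the
   open sets O_0, ..., O_(N-1).  For non-overlapping intervals of total length L,
   the layers n < K contribute at most K L to the sum of the U's and the layers
   n >= K at most the tail sum_(n >= K) |A_n|, so sum rho <= (K + 2) L + (small). *)

Lemma real_induction {R : realType} (c d : R) (P : R -> Prop) :
  c <= d -> P c ->
  (forall s, c < s <= d -> (forall y, c <= y < s -> P y) -> P s) ->
  (forall x, c <= x < d -> P x ->
     exists2 e, 0 < e & forall y, x < y < x + e -> y <= d -> P y) ->
  P d.
Proof.
move=> cd Pc Pleft Pright.
pose S := [set x | c <= x <= d /\ forall z, c <= z <= x -> P z].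
have Sc : S c.
  by split=> [|z zc]; [rewrite lexx cd | rewrite -(@le_anti _ _ c z zc)].
have hS : has_sup S by split; [exists c | exists d => x [/andP[_ ->]]].
pose s := sup S.
have cs : c <= s by exact: sup_upper_bound.
have sd : s <= d by apply: ge_sup; [exists c | move=> x [/andP[_ ->]]].
have P_below_s z : c <= z < s -> P z.
  move=> /andP[cz zs]; have zs0 : 0 < s - z by rewrite subr_gt0.
  have [x [_ Px] zx] := sup_adherent zs0 hS.
  by apply: Px; rewrite cz; move: zx; rewrite opprB addrCA subrr addr0 => /ltW.
have Ps : P s.
  have [<-//|cs'] := eqVneq c s.
  by apply: Pleft => //; rewrite sd andbT lt_neqAle cs' cs.
have Ss : S s.
  split=> [|z /andP[cz zs]]; first by rewrite cs sd.
  have [zs'|sz] := ltP z s; first by apply: P_below_s; rewrite cz zs'.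
  by have -> : z = s by apply/le_anti; rewrite zs sz.
have [sd'|ds] := ltP s d; last by have <- : s = d by apply/le_anti; rewrite sd ds.
have [e e0 Pe] : exists2 e, 0 < e & forall y, s < y < s + e -> y <= d -> P y.
  by apply: Pright => //; rewrite cs sd'.
pose m := Num.min e (d - s).
have m0 : 0 < m by rewrite lt_min e0 subr_gt0.
have me : m <= e by rewrite ge_min lexx.
have mds : m <= d - s by rewrite ge_min lexx orbT.
pose y := s + m / 2.
have sy : s < y by rewrite /y ltrDl divr_gt0.
have Sy : S y.
  have yd : y <= d by rewrite /y; lra.
  split=> [|z /andP[cz zy]]; first by rewrite yd andbT (le_trans cs) ?ltW.
  have [zs|sz] := leP z s; first by apply: Ss.2; rewrite cz zs.
  by apply: Pe; [rewrite sz /=; move: zy; rewrite /y; lra | exact: le_trans yd].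
by have := sup_upper_bound hS Sy; rewrite leNgt sy.
Qed.

Lemma md_is_lt_near {R : realType} {M : Type} {rho : M -> M -> R} {a b : R}
    {f : R -> M} {x l : R} :
  md_is rho a b f x l -> exists2 del, 0 < del & forall t, t != 0 -> `|t| < del ->
    a <= x + t <= b -> rho (f (x + t)) (f x) < (l + 1) * `|t|.
Proof.
have ll1 : l < l + 1 by rewrite ltrDl.
move=> /cvgr_lt /(_ (l + 1) ll1); rewrite /within /= => /nbhs_ballP [del del0 del_ball].
exists del => // t t0 tdel tab.
have := del_ball t; rewrite /ball /= sub0r normrN => /(_ tdel) /(_ (conj t0 tab)).
by rewrite ltr_pdivrMr ?normr_gt0.
Qed.

Lemma md_is_dist_le {R : realType} {M : Type} {rho : M -> M -> R} {a b : R}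
    {f : R -> M} {x l e : R} :
  md_is rho a b f x l -> 0 < e -> exists2 del, 0 < del & forall t, t != 0 ->
    `|t| < del -> a <= x + t <= b -> rho (f (x + t)) (f x) <= e.
Proof.
move=> /md_is_lt_near[del del0 md_lt] e0.
have l1_gt0 : 0 < `|l| + 1 by rewrite ltr_pwDr.
exists (Num.min del (e / (`|l| + 1))); first by rewrite lt_min del0 divr_gt0.
move=> t t0; rewrite lt_min => /andP[tdel te] tab.
apply: ltW; apply: (lt_le_trans (md_lt t t0 tdel tab)).
apply: (@le_trans _ _ ((`|l| + 1) * `|t|)).
  by rewrite ler_wpM2r ?lerD2r ?ler_norm.
by rewrite mulrC -ler_pdivlMr // ltW.
Qed.

Lemma open_right_nbhs {R : realType} {O : set R} {x : R} : open O -> O x ->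
  exists2 e, 0 < e & forall y, x < y < x + e -> O y.
Proof.
move=> oO Ox; have /nbhs_ballP[e e0 He] := oO x Ox.
exists e => // y /andP[xy ye]; apply: He; rewrite /ball /=.
by rewrite ler0_norm ?subr_le0 ?ltW //; lra.
Qed.

Lemma open_right_nbhs_finite {R : realType} (O : nat -> set R) (x : R) (N : nat) :
  (forall n, (n < N)%N -> open (O n) /\ O n x) ->
  exists2 e, 0 < e & forall n y, (n < N)%N -> x < y < x + e -> O n y.
Proof.
elim: N => [|N IH] ON; first by exists 1.
have [e e0 He] := IH (fun n nN => ON n (ltnW nN)).
have [oN ONx] := ON N (ltnSn N).
have [e' e'0 He'] := open_right_nbhs oN ONx.
exists (Num.min e e'); first by rewrite lt_min e0 e'0.
move=> n y; rewrite ltnS leq_eqVlt => /orP[/eqP->|nN] /andP[xy ye].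
  by apply: He'; rewrite xy (lt_le_trans ye) // lerD2l ge_min lexx orbT.
by apply: He => //; rewrite xy (lt_le_trans ye) // lerD2l ge_min lexx.
Qed.

Definition layer_mass {R : realType} (O : nat -> set R) (c y : R) : \bar R :=
  (\sum_(0 <= n <oo) lebesgue_measure (O n `&` `]c, y]))%E.

Section LayerMass.
Context {R : realType} {O : nat -> set R}.
Hypothesis measurable_O : forall n, measurable (O n).

Let measurable_O_itv n (c y : R) : measurable (O n `&` `]c, y]).
Proof. exact: measurableI (measurable_O n) (measurable_itv _). Qed.

Lemma layer_mass_ge0 (c y : R) : (0 <= layer_mass O c y)%E.
Proof. by apply: nneseries_ge0 => n _ _; apply: measure_ge0. Qed.

Lemma le_layer_mass (c : R) {y z : R} :
  y <= z -> (layer_mass O c y <= layer_mass O c z)%E.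
Proof.
move=> yz; apply: lee_nneseries => [n _ _|n _]; first exact: measure_ge0.
apply: le_measure; rewrite ?inE; try exact: measurable_O_itv.
by apply: setIS; apply: subset_itvl; rewrite bnd_simp.
Qed.

Lemma layer_mass_split {c x y : R} : c <= x -> x <= y ->
  layer_mass O c y = (layer_mass O c x + layer_mass O x y)%E.
Proof.
move=> cx xy; rewrite /layer_mass -nneseriesD; last 2 first.
- by move=> n _ _; apply: measure_ge0.
- by move=> n _ _; apply: measure_ge0.
apply: eq_eseriesr => n _.
rewrite (@itv_bndbnd_setU _ _ _ (BRight x)) ?bnd_simp // setIUr measureU //;
  try exact: measurable_O_itv.
apply/seteqP; split => t // [[_]]; rewrite /= !in_itv /= => /andP[_ tx] [_].
by move=> /andP[xt _]; move: (lt_le_trans xt tx); rewrite ltxx.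
Qed.

Lemma layer_mass_ge {x y : R} {N : nat} : x < y ->
  (forall n, (n < N)%N -> `]x, y] `<=` O n) ->
  ((N%:R * (y - x))%:E <= layer_mass O x y)%E.
Proof.
move=> xy sub_O.
apply: le_trans (@nneseries_lim_ge _ _ _ 0 N _); last by move=> n _ _; apply: measure_ge0.
rewrite (@eq_big_nat _ _ _ 0 N _ (fun _ => (y - x)%:E)).
  by rewrite sumEFin sumr_const_nat subn0 mulr_natl.
move=> n /andP[_ nN]; rewrite setIidr; last exact: sub_O.
by rewrite lebesgue_measure_itv /= lte_fin xy -EFinB.
Qed.

End LayerMass.

Definition superlevel {R : realType} (a b : R) (h : R -> R) (n : nat) : set R :=
  `[a, b] `&` h @^-1` `]n%:R, +oo[.

Lemma measurable_superlevel {R : realType} {a b : R} {h : R -> R} (n : nat) :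
  measurable_fun `[a, b] h -> measurable (superlevel a b h n).
Proof. by move=> mh; exact: mh (measurable_itv _) _ (measurable_itv _). Qed.

Section IncrementBound.
Context {R : realType} {M : Type} {rho : M -> M -> R} {a b : R} {f : R -> M}
  {mdf : R -> R} {O : nat -> set R}.
Hypotheses (rho_metric : is_metric rho)
  (md_f : forall x, a <= x <= b -> md_is rho a b f x (mdf x))
  (open_O : forall n, open (O n))
  (superlevel_sub_O : forall n, superlevel a b mdf n `<=` O n).

Let measurable_O n : measurable (O n) := open_measurable (open_O n).

Let increment_le (c y : R) :=
  ((rho (f y) (f c) - 2 * (y - c))%:E <= layer_mass O c y)%E.

Let increment_le_left (c s : R) : a <= c -> c < s -> s <= b ->
  (forall y, c <= y < s -> increment_le c y) -> increment_le c s.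
Proof.
move=> ac cs sb increment_below; apply/lee_addgt0Pr => e e0.
have sab : a <= s <= b by rewrite (le_trans ac (ltW cs)) sb.
have [del del0 near_s] := md_is_dist_le (md_f _ sab) e0.
pose y := Num.max c (s - del / 2).
have cy : c <= y by rewrite le_max lexx.
have ys : y < s by rewrite gt_max cs ltrBlDr ltrDl divr_gt0.
have rho_ys : rho (f y) (f s) <= e.
  have := near_s (y - s); rewrite (addrC s) subrK; apply.
  - by rewrite subr_eq0 lt_eqF.
  - have : s - del / 2 <= y by rewrite le_max lexx orbT.
    by rewrite ltr0_norm ?subr_lt0 // opprB; lra.
  - by rewrite (le_trans ac cy) (le_trans (ltW ys) sb).
apply: (@le_trans _ _ ((rho (f y) (f c) - 2 * (y - c) + e)%:E)).
  have [_ _ rho_sym rho_tri] := rho_metric.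
  rewrite lee_fin; have := rho_tri (f s) (f y) (f c).
  by rewrite [rho (f s) (f y)]rho_sym; lra.
rewrite EFinD; apply: leeD => //.
apply: le_trans (increment_below y _) (le_layer_mass measurable_O c (ltW ys)).
by rewrite cy.
Qed.

Let increment_le_right {c x : R} : a <= c -> c <= x -> x < b -> increment_le c x ->
  exists2 e, 0 < e & forall y, x < y < x + e -> y <= b -> increment_le c y.
Proof.
move=> ac cx xb increment_x.
have xab : a <= x <= b by rewrite (le_trans ac cx) ltW.
have [del del0 near_x] := md_is_lt_near (md_f _ xab).
pose N := Num.truncn (mdf x).
have mdf_lt : mdf x < N%:R + 1 by rewrite natr1; exact: truncnS_gt.
have [e e0 x_in_O] : exists2 e, 0 < e &
    forall n y, (n < N)%N -> x < y < x + e -> O n y.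
  apply: open_right_nbhs_finite => n nN; split; first exact: open_O.
  apply: superlevel_sub_O; split; first by rewrite /= in_itv.
  move: nN; rewrite /= in_itv /= andbT truncn_gt_nat.
  by apply: lt_le_trans; rewrite ltr_nat.
exists (Num.min e del) => [|y /andP[xy ye] yb]; first by rewrite lt_min e0 del0.
have [me mdel] : Num.min e del <= e /\ Num.min e del <= del.
  by rewrite !ge_min !lexx orbT.
have rho_yx : rho (f y) (f x) < (mdf x + 1) * (y - x).
  have := near_x (y - x); rewrite (addrC x) subrK gtr0_norm ?subr_gt0 //; apply.
  - by rewrite subr_eq0 gt_eqF.
  - by lra.
  - by rewrite (le_trans ac (le_trans cx (ltW xy))) yb.
have mass_xy : ((N%:R * (y - x))%:E <= layer_mass O x y)%E.
  apply: (layer_mass_ge xy) => n nN t.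
  by rewrite /= in_itv /= => /andP[xt ty]; apply: x_in_O nN _; rewrite xt /=; lra.
rewrite /increment_le (layer_mass_split measurable_O cx (ltW xy)).
apply: le_trans (leeD increment_x mass_xy); rewrite -EFinD lee_fin.
have [_ _ _ rho_tri] := rho_metric; have := rho_tri (f y) (f x) (f c).
have : (mdf x + 1) * (y - x) <= (N%:R + 2) * (y - x) by rewrite ler_wpM2r; lra.
lra.
Qed.

Lemma dist_le_layer_mass (c d : R) : a <= c -> c <= d -> d <= b ->
  ((rho (f d) (f c) - 2 * (d - c))%:E <= layer_mass O c d)%E.
Proof.
move=> ac cd db; apply: (@real_induction _ c d (increment_le c)) => //.
- have [_ rho0 _ _] := rho_metric.
  by rewrite /increment_le (proj2 (rho0 _ _) erefl) subrr mulr0 subr0 layer_mass_ge0.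
- move=> s /andP[cs sd]; apply: increment_le_left => //; exact: le_trans db.
- move=> x /andP[cx xd] increment_x.
  have [e e0 near_x] := increment_le_right ac cx (lt_le_trans xd db) increment_x.
  by exists e => // y xy yd; apply: near_x => //; exact: le_trans db.
Qed.

End IncrementBound.

Lemma superlevel_measure_lty {R : realType} {a b : R} {h : R -> R} (n : nat) :
  measurable_fun `[a, b] h -> (lebesgue_measure (superlevel a b h n) < +oo)%E.
Proof.
move=> mh; apply: (@le_lt_trans _ _ (lebesgue_measure `[a, b])).
  apply: le_measure; rewrite ?inE; last by move=> x [].
  - exact: measurable_superlevel.
  - exact: measurable_itv.
exact: (@compact_finite_measure R _ (@segment_compact R a b)).
Qed.

Lemma nneseries_indic_le {R : realType} (h : R -> R) (A : nat -> set R) (x : R) :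
  (forall n, A n x -> n%:R < h x) ->
  (\sum_(0 <= n <oo) (\1_(A n) x)%:E <= (`|h x| + 1)%:E)%E.
Proof.
move=> A_lt; pose K := Num.truncn `|h x|.
rewrite (@nneseries_split _ _ 0 K.+1); last by move=> k _; rewrite lee_fin.
rewrite add0n eseries0 ?adde0; last first.
  move=> k Kk _; rewrite indicE; case: (boolP (x \in A k)) => [/set_mem Akx|//].
  exfalso; have := A_lt _ Akx; have : `|h x| < K.+1%:R by exact: truncnS_gt.
  have : K.+1%:R <= k%:R :> R by rewrite ler_nat.
  by have := ler_norm (h x); lra.
rewrite sumEFin lee_fin.
apply: le_trans (_ : \sum_(0 <= k < K.+1) (1 : R) <= _).
  by apply: ler_sum => k _; rewrite indicE; case: (_ \in _) => /=; lra.
by rewrite sumr_const_nat subn0 -natr1 lerD2r truncn_le.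
Qed.

Lemma integrable_superlevel_summable {R : realType} {a b : R} {h : R -> R} :
  lebesgue_measure.-integrable `[a, b] (EFin \o h) ->
  (\sum_(0 <= n <oo) lebesgue_measure (superlevel a b h n) < +oo)%E.
Proof.
move=> h_int; have /integrableP[mh h_fin] := h_int.
have /integrableP[mabs _] := integrable_abse h_int.
have mA n : measurable (superlevel a b h n).
  by apply: measurable_superlevel; apply/measurable_EFinP.
have mab : measurable `[a, b] by exact: measurable_itv.
have mindic n : measurable_fun `[a, b] (EFin \o \1_(superlevel a b h n)).
  by apply/measurable_EFinP; apply: measurable_indic.
have -> : (\sum_(0 <= n <oo) lebesgue_measure (superlevel a b h n) =
    \sum_(0 <= n <oo) \int[@lebesgue_measure R]_(x in `[a, b])
      (\1_(superlevel a b h n) x)%:E)%E.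
  apply: eq_eseriesr => n _; rewrite integral_indic; [|exact: mab|exact: mA].
  by rewrite setIidl // => x [].
rewrite -integral_nneseries; last 3 first.
- exact: mab.
- exact: mindic.
- by move=> n x _; rewrite lee_fin.
apply: (@le_lt_trans _ _ (\int[@lebesgue_measure R]_(x in `[a, b])
    (`|(h x)%:E| + 1%:E))%E).
  apply: ge0_le_integral => //.
  - by move=> x _; apply: nneseries_ge0 => n _ _; rewrite lee_fin.
  - by apply: ge0_emeasurable_sum => [k x _ _|k _]; [rewrite lee_fin | exact: mindic].
  - by apply: emeasurable_funD => //; exact: measurable_cst.
  - move=> x _; rewrite abse_EFin -EFinD; apply: nneseries_indic_le.
    by move=> n [_]; rewrite /= in_itv /= andbT.
rewrite ge0_integralD; last 5 first.
- exact: mab.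
- by move=> x _; apply: abse_ge0.
- exact: mabs.
- by move=> x _; rewrite lee_fin.
- exact: measurable_cst.
rewrite lte_add_pinfty // integral_cst // mul1e.
exact: (@compact_finite_measure R _ (@segment_compact R a b)).
Qed.

Lemma outer_open_approx {R : realType} {A : nat -> set R} {e : R} :
  (forall n, measurable (A n)) -> (forall n, (lebesgue_measure (A n) < +oo)%E) ->
  0 < e -> exists O : nat -> set R, [/\ forall n, open (O n),
    forall n, A n `<=` O n &
    (\sum_(0 <= n <oo) lebesgue_measure (O n `\` A n) <= e%:E)%E].
Proof.
move=> mA A_fin e0.
have e_n n : 0 < e / (2 ^ n.+1)%:R by rewrite divr_gt0 // ltr0n expn_gt0.
case: (choice (fun n => lebesgue_regularity_outer (mA n) (A_fin n) (e_n n))) => O HO.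
exists O; split=> [n|n|]; [by case: (HO n) | by case: (HO n) |].
apply: (@le_trans _ _ (\sum_(0 <= n <oo) (0 + (e / (2 ^ n.+1)%:R)%:E))%E).
  apply: lee_nneseries => [n _ _|n _]; first exact: measure_ge0.
  by rewrite add0e; case: (HO n) => _ _ /ltW.
apply: le_trans (@epsilon_trick _ (fun _ => 0%E) e _ (fun _ => lexx 0%E) (ltW e0)) _.
by rewrite eseries0 ?add0e.
Qed.

Lemma nneseries_tail_lt {R : realType} {u : nat -> \bar R} {e : R} :
  (forall n, (0 <= u n)%E) -> (\sum_(0 <= n <oo) u n < +oo)%E -> 0 < e ->
  exists K, (\sum_(K <= n <oo) u n < e%:E)%E.
Proof.
move=> u0 u_fin e0.
have /fine_cvgP[fin_tail /cvgr_lt /(_ e e0) tail_lt] :=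
  nneseries_tail_cvg u_fin (fun k _ => u0 k).
have : \forall K \near \oo, (\sum_(K <= n <oo) u n < e%:E)%E.
  near=> K.
  have /fineK <- : (\sum_(K <= n <oo) u n)%E \is a fin_num by near: K.
  by rewrite lte_fin; near: K.
by move=> [N _ HN]; exists N; apply: HN => /=.
Unshelve. all: by end_near.
Qed.

Section NonoverlappingIntervals.
Context {R : realType} {n : nat} {ai bi : 'I_n -> R}.
Hypothesis nonoverlapping : forall i j, i != j -> bi i <= ai j \/ bi j <= ai i.

Lemma sum_measure_setI_itv_le {B : set R} : measurable B ->
  (\sum_(i < n) lebesgue_measure (B `&` `]ai i, bi i]) <= lebesgue_measure B)%E.
Proof.
move=> mB; have mBI i : measurable (B `&` `]ai i, bi i]).
  by apply: measurableI => //; exact: measurable_itv.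
rewrite -measure_bigsetU_ord //.
  apply: le_measure; rewrite ?inE //;
    first by apply: bigsetU_measurable => i _; exact: mBI.
  by move=> x; rewrite -bigcup_seq => -[i _ []].
move=> i j _ _ [x [[_ xi] [_ xj]]]; apply/eqP; apply: contraT => ij.
move: xi xj; rewrite /= !in_itv /= => /andP[? ?] /andP[? ?].
by case: (nonoverlapping _ _ ij) => ?; lra.
Qed.

Lemma sum_layer_mass_le {A O : nat -> set R} :
  (forall m, measurable (A m)) -> (forall m, measurable (O m)) ->
  (\sum_(i < n) layer_mass O (ai i) (bi i) <=
   \sum_(0 <= m <oo) \sum_(i < n) lebesgue_measure (A m `&` `]ai i, bi i]) +
   \sum_(0 <= m <oo) lebesgue_measure (O m `\` A m))%E.
Proof.
move=> mA mO; have mI i : measurable `]ai i, bi i] by exact: measurable_itv.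
rewrite /layer_mass -nneseries_sum; last by move=> m i _; exact: measure_ge0.
rewrite -nneseriesD; last 2 first.
- by move=> m _ _; apply: sume_ge0 => i _; exact: measure_ge0.
- by move=> m _ _; exact: measure_ge0.
apply: lee_nneseries => [m _ _|m _]; first by apply: sume_ge0 => i _; exact: measure_ge0.
have mOA : measurable (O m `\` A m) by exact: measurableD.
apply: (@le_trans _ _ (\sum_(i < n) (lebesgue_measure (A m `&` `]ai i, bi i]) +
    lebesgue_measure ((O m `\` A m) `&` `]ai i, bi i])))%E); last first.
  by rewrite big_split /=; exact: leeD (lexx _) (sum_measure_setI_itv_le mOA).
apply: lee_sum => i _.
have mAI := measurableI _ _ (mA m) (mI i); have mOAI := measurableI _ _ mOA (mI i).
apply: (le_trans _ (measureU2 _ _ _)); last 2 first.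
- exact: mAI.
- exact: mOAI.
apply: le_measure; rewrite ?inE.
- exact: measurableI (mO m) (mI i).
- exact: measurableU.
- by move=> x [Ox Ix]; have [Ax|nAx] := pselect (A m x); [left | right].
Qed.

Lemma sum_itv_measure_le {A : nat -> set R} (K : nat) :
  (forall i, ai i <= bi i) -> (forall m, measurable (A m)) ->
  (\sum_(0 <= m <oo) \sum_(i < n) lebesgue_measure (A m `&` `]ai i, bi i]) <=
   (K%:R * \sum_(i < n) (bi i - ai i))%:E + \sum_(K <= m <oo) lebesgue_measure (A m))%E.
Proof.
move=> ai_le_bi mA; have mI i : measurable `]ai i, bi i] by exact: measurable_itv.
rewrite (@nneseries_split _ _ 0 K); last first.
  by move=> m _; apply: sume_ge0 => i _; exact: measure_ge0.
rewrite add0n; apply: leeD; last first.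
  apply: lee_nneseries => [m _ _|m _]; last exact: sum_measure_setI_itv_le.
  by apply: sume_ge0 => i _; exact: measure_ge0.
apply: (@le_trans _ _ (\sum_(0 <= m < K) (\sum_(i < n) (bi i - ai i))%:E)%E); last first.
  by rewrite sumEFin sumr_const_nat subn0 mulr_natl.
apply: lee_sum => m _; rewrite -sumEFin; apply: lee_sum => i _.
apply: (@le_trans _ _ (lebesgue_measure `]ai i, bi i])).
  apply: le_measure; rewrite ?inE; last by move=> x [].
  - exact: measurableI (mA m) (mI i).
  - exact: mI.
rewrite lebesgue_measure_itv /=; case: ifP => _; first by rewrite -EFinB.
by rewrite lee_fin subr_ge0.
Qed.

Lemma sum_layer_mass_le_tail {A O : nat -> set R} (K : nat) {e : R} :
  (forall i, ai i <= bi i) -> (forall m, measurable (A m)) ->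
  (forall m, measurable (O m)) ->
  (\sum_(0 <= m <oo) lebesgue_measure (O m `\` A m) <= e%:E)%E ->
  (\sum_(K <= m <oo) lebesgue_measure (A m) <= e%:E)%E ->
  (\sum_(i < n) layer_mass O (ai i) (bi i) <=
   (K%:R * \sum_(i < n) (bi i - ai i) + 2 * e)%:E)%E.
Proof.
move=> ai_le_bi mA mO OA_le tail_le.
apply: le_trans (sum_layer_mass_le mA mO) _.
rewrite mulr2n mulrDl mul1r !EFinD addeA; apply: leeD => //.
by apply: le_trans (sum_itv_measure_le K ai_le_bi mA) _; apply: leeD.
Qed.

End NonoverlappingIntervals.

Theorem theorem3p8 (R : realType) (M : Type) (rho : M -> M -> R)
  (a b : R) (f : R -> M) :
  is_metric rho ->
  (* md(f,x) exists for every x in [a,b]; mdf x denotes md(f,x) *)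
  forall mdf : R -> R,
  (forall x, a <= x <= b -> md_is rho a b f x (mdf x)) ->
  (* x |-> md(f,x) is Lebesgue integrable on [a,b] *)
  (@lebesgue_measure R).-integrable `[a, b] (EFin \o mdf) ->
  abs_cont_metric rho a b f.
Proof.
move=> rho_metric mdf md_f mdf_int eps eps0.
have /integrableP[/measurable_EFinP mdf_meas _] := mdf_int.
pose A := superlevel a b mdf.
have mA n : measurable (A n) by exact: measurable_superlevel.
have e4_gt0 : 0 < eps / 4 by rewrite divr_gt0.
case: (outer_open_approx mA (fun n => superlevel_measure_lty n mdf_meas) e4_gt0)
  => O [open_O A_sub_O OA_small].
have [K tail_small] := nneseries_tail_lt (fun n => measure_ge0 lebesgue_measure (A n))
  (integrable_superlevel_summable mdf_int) e4_gt0.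
exists (eps / (4 * (K%:R + 2))) => [|n ai bi ab_sub disj len_lt].
  by rewrite divr_gt0 // mulr_gt0 // ltr_wpDl.
have ai_le_bi i : ai i <= bi i by case: (ab_sub i) => _ [].
have mO m : measurable (O m) by exact: open_measurable.
have increments : ((\sum_(i < n) (rho (f (bi i)) (f (ai i)) - 2 * (bi i - ai i)))%:E
    <= \sum_(i < n) layer_mass O (ai i) (bi i))%E.
  rewrite -sumEFin; apply: lee_sum => i _; have [? [? ?]] := ab_sub i.
  exact: (dist_le_layer_mass rho_metric md_f open_O A_sub_O).
have := le_trans increments
  (sum_layer_mass_le_tail disj K ai_le_bi mA mO OA_small (ltW tail_small)).
rewrite lee_fin sumrB -mulr_sumr.
set L := \sum_(i < n) (bi i - ai i) in len_lt *.
have : (K%:R + 2) * L <= eps / 4.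
  rewrite mulrC -ler_pdivlMr ?ltr_wpDl //; apply: ltW; move: len_lt.
  by rewrite invfM mulrA.
have : 0 <= L by apply: sumr_ge0 => i _; rewrite subr_ge0.
lra.
Qed.
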